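(* Every $\operatorname{B}$-set $B\subset\mathbb{R}^2$ has positive reach.
   Context: A set has positive reach if there is $\varepsilon>0$ such that every point at distance less than $\varepsilon$ from it has a unique nearest point in it. A function $f$ on an open interval is semiconcave if $f(x)-\frac c2x^2$ is concave for some $c\geq0$, and semiconvex if $-f$ is semiconcave. $M\subset\mathbb{R}^2$ is a $\operatorname{B}_-$-set if there are $r>0$ and Lipschitz functions $\psi\leq0\leq\varphi$ on $[0,r]$ with $\varphi$ semiconcave on $(0,r)$, $\psi$ semiconvex on $(0,r)$, $\varphi(0)=\psi(0)=0$, $\varphi'_+(0)=\psi'_+(0)=0$ and $M=\{(x,y):x\in[0,r],\ \psi(x)\leq y\leq\varphi(x)\}$; a $\operatorname{B}_+$-set is defined the same way with $[-r,r]$, $(-r,r)$ and $\varphi'(0)=\psi'(0)=0$; a $\operatorname{B}$-set is a $\operatorname{B}_-$-set or a $\operatorname{B}_+$-set. *)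

From Stdlib Require Import Reals.
Open Scope R_scope.

Definition point := (R * R)%type.

Definition dist2 (p q : point) : R :=
  sqrt ((fst p - fst q)^2 + (snd p - snd q)^2).

Definition nearest (M : point -> Prop) (x m : point) : Prop :=
  M m /\ forall m', M m' -> dist2 x m <= dist2 x m'.

(* positive reach: exists eps > 0 such that every point at distance < eps
   from M (i.e. dist(x,M) < eps, equivalently some m in M with |x-m| < eps)
   has a unique nearest point in M *)
Definition positive_reach (M : point -> Prop) : Prop :=
  exists eps, 0 < eps /\
    forall x : point, (exists m, M m /\ dist2 x m < eps) ->
      exists! m, nearest M x m.

Definition lipschitz_on (f : R -> R) (a b : R) : Prop :=
  exists L, forall x y, a <= x <= b -> a <= y <= b ->
    Rabs (f x - f y) <= L * Rabs (x - y).

Definition concave_on (f : R -> R) (a b : R) : Prop :=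
  forall x y t, a < x < b -> a < y < b -> 0 <= t <= 1 ->
    t * f x + (1 - t) * f y <= f (t * x + (1 - t) * y).

Definition semiconcave_on (f : R -> R) (a b : R) : Prop :=
  exists c, 0 <= c /\ concave_on (fun x => f x - c / 2 * x ^ 2) a b.

Definition semiconvex_on (f : R -> R) (a b : R) : Prop :=
  semiconcave_on (fun x => - f x) a b.

Definition right_deriv0_zero (f : R -> R) : Prop :=
  forall e, 0 < e -> exists d, 0 < d /\
    forall h, 0 < h < d -> Rabs ((f h - f 0) / h) <= e.

Definition deriv0_zero (f : R -> R) : Prop :=
  forall e, 0 < e -> exists d, 0 < d /\
    forall h, h <> 0 -> Rabs h < d -> Rabs ((f h - f 0) / h) <= e.

Definition B_minus_set (M : point -> Prop) : Prop :=
  exists r (phi psi : R -> R), 0 < r /\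
    lipschitz_on phi 0 r /\ lipschitz_on psi 0 r /\
    (forall x, 0 <= x <= r -> psi x <= 0 <= phi x) /\
    semiconcave_on phi 0 r /\ semiconvex_on psi 0 r /\
    phi 0 = 0 /\ psi 0 = 0 /\
    right_deriv0_zero phi /\ right_deriv0_zero psi /\
    (forall p : point, M p <->
       (0 <= fst p <= r /\ psi (fst p) <= snd p <= phi (fst p))).

Definition B_plus_set (M : point -> Prop) : Prop :=
  exists r (phi psi : R -> R), 0 < r /\
    lipschitz_on phi (- r) r /\ lipschitz_on psi (- r) r /\
    (forall x, - r <= x <= r -> psi x <= 0 <= phi x) /\
    semiconcave_on phi (- r) r /\ semiconvex_on psi (- r) r /\
    phi 0 = 0 /\ psi 0 = 0 /\
    deriv0_zero phi /\ deriv0_zero psi /\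
    (forall p : point, M p <->
       (- r <= fst p <= r /\ psi (fst p) <= snd p <= phi (fst p))).

Definition B_set (M : point -> Prop) : Prop := B_minus_set M \/ B_plus_set M.

(* A region between the graphs of Lipschitz functions psi <= phi over [a, b] is
   compact, so every point x has a nearest point in it.  If x had two nearest
   points m1 <> m2 at distance delta, the midpoint m of [m1, m2] would be closer
   to x by |m1 - m2|^2 / 4.  Semiconcavity of phi and semiconvexity of psi with
   constant c put a point of the region on the vertical line through m within
   c |m1 - m2|^2 / 8 of m, and moving m there costs less than the gain once
   delta is small compared to 1 / c. *)

From Stdlib Require Import Reals Lra Psatz.
Open Scope R_scope.

Lemma Rle_of_le_shift_small (G H K : R) :
  0 <= K -> (forall d, 0 < d < 1 -> G <= H + K * d) -> G <= H.
Proof.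
  intros HK Hsmall; apply Rle_plus_epsilon; intros eps Heps.
  set (d := Rmin (1 / 2) (eps / (K + 1))).
  assert (Hd : 0 < d <= eps / (K + 1)).
  { unfold d, Rmin; destruct Rle_dec; split; try lra;
      apply Rdiv_lt_0_compat; lra. }
  assert (Hd1 : d < 1) by (unfold d; pose proof (Rmin_l (1 / 2) (eps / (K + 1))); lra).
  assert (HKd : K * d <= eps).
  { apply Rle_trans with (K * (eps / (K + 1))); [apply Rmult_le_compat_l; lra|].
    apply Rmult_le_reg_r with (K + 1); [lra|].
    replace (K * (eps / (K + 1)) * (K + 1)) with (K * eps) by (field; lra). nra. }
  specialize (Hsmall d (conj (proj1 Hd) Hd1)); lra.
Qed.

Lemma Rabs_le_between (z B : R) : Rabs z <= B -> - B <= z <= B.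
Proof.
  intros Hz; pose proof (Rle_abs z); pose proof (Rle_abs (- z)).
  rewrite Rabs_Ropp in *; lra.
Qed.

Definition clamp (lo hi t : R) : R := Rmax lo (Rmin t hi).

Lemma clamp_in (lo hi t : R) : lo <= hi -> lo <= clamp lo hi t <= hi.
Proof. intros; unfold clamp, Rmax, Rmin; repeat destruct Rle_dec; lra. Qed.

Lemma clamp_id (lo hi t : R) : lo <= t <= hi -> clamp lo hi t = t.
Proof. intros; unfold clamp, Rmax, Rmin; repeat destruct Rle_dec; lra. Qed.

Lemma clamp_lipschitz (lo hi t lo' hi' t' : R) :
  Rabs (clamp lo hi t - clamp lo' hi' t')
  <= Rabs (lo - lo') + Rabs (hi - hi') + Rabs (t - t').
Proof.
  unfold clamp, Rmax, Rmin; repeat destruct Rle_dec;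
    unfold Rabs; repeat destruct Rcase_abs; lra.
Qed.

Lemma clamp_nearest (lo hi t y : R) :
  lo <= y <= hi -> (t - clamp lo hi t) ^ 2 <= (t - y) ^ 2.
Proof.
  intros; unfold clamp, Rmax, Rmin; repeat destruct Rle_dec; try nra.
  all: rewrite Rminus_diag; pose proof (pow2_ge_0 (t - y)); simpl; lra.
Qed.

Lemma clamp_near (lo hi t d : R) :
  lo <= hi -> 0 <= d -> lo <= t + d -> t - d <= hi -> Rabs (clamp lo hi t - t) <= d.
Proof.
  intros; unfold clamp, Rmax, Rmin; repeat destruct Rle_dec;
    unfold Rabs; destruct Rcase_abs; lra.
Qed.

Definition lipschitz_with (f : R -> R) (a b L : R) : Prop :=
  forall x y, a <= x <= b -> a <= y <= b -> Rabs (f x - f y) <= L * Rabs (x - y).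

Lemma lipschitz_on_nonneg (f : R -> R) (a b : R) :
  lipschitz_on f a b -> exists L, 0 <= L /\ lipschitz_with f a b L.
Proof.
  intros [L HL]; exists (Rabs L); split; [apply Rabs_pos|].
  intros x y Hx Hy; eapply Rle_trans; [exact (HL x y Hx Hy)|].
  apply Rmult_le_compat_r; [apply Rabs_pos | apply RRle_abs].
Qed.

Lemma lipschitz_on_opp (f : R -> R) (a b : R) :
  lipschitz_on f a b -> lipschitz_on (fun x => - f x) a b.
Proof.
  intros [L HL]; exists L; intros x y Hx Hy.
  replace (- f x - - f y) with (- (f x - f y)) by ring.
  rewrite Rabs_Ropp; auto.
Qed.

Lemma lipschitz_with_clamp (f : R -> R) (a b L : R) :
  a <= b -> 0 <= L -> lipschitz_with f a b L ->
  forall t t', Rabs (f (clamp a b t) - f (clamp a b t')) <= L * Rabs (t - t').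
Proof.
  intros Hab HL Hf t t'.
  eapply Rle_trans; [apply Hf; apply clamp_in; exact Hab|].
  apply Rmult_le_compat_l; [exact HL|].
  pose proof (clamp_lipschitz a b t a b t') as Hclamp.
  rewrite !Rminus_diag, Rabs_R0 in Hclamp; lra.
Qed.

Lemma lipschitz_continuity_pt (f : R -> R) (K : R) :
  0 <= K -> (forall t t', Rabs (f t - f t') <= K * Rabs (t - t')) ->
  forall t, continuity_pt f t.
Proof.
  intros HK Hf t eps Heps.
  exists (eps / (K + 1)); split; [apply Rdiv_lt_0_compat; lra|].
  intros y [_ Hy]; simpl in *; unfold R_dist in *.
  eapply Rle_lt_trans; [apply Hf|].
  assert (eps / (K + 1) * (K + 1) = eps) by (field; lra).
  pose proof (Rabs_pos (y - t)); nra.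
Qed.

Lemma continuity_pt_sqr_dev (u : R) (f : R -> R) (t : R) :
  continuity_pt f t -> continuity_pt (fun s => (u - f s) ^ 2) t.
Proof.
  intros Hf; apply (continuity_pt_comp f (fun y => (u - y) ^ 2)); [exact Hf | reg].
Qed.

(* The identity ((p + q) / 2)^2 = (p^2 + q^2) / 2 - (q - p)^2 / 4 turns the
   c / 2 x^2 correction of [semiconcave_on] into c / 8 (q - p)^2 at midpoints. *)
Definition midpoint_semiconcave (f : R -> R) (a b c : R) : Prop :=
  forall p q, a <= p <= b -> a <= q <= b ->
    (f p + f q) / 2 - c / 8 * (q - p) ^ 2 <= f ((p + q) / 2).

Lemma midpoint_semiconcave_mono (f : R -> R) (a b c c' : R) :
  c <= c' -> midpoint_semiconcave f a b c -> midpoint_semiconcave f a b c'.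
Proof.
  intros Hcc Hf p q Hp Hq; specialize (Hf p q Hp Hq).
  pose proof (pow2_ge_0 (q - p)); nra.
Qed.

Lemma concave_midpoint_open (f : R -> R) (a b c p q : R) :
  concave_on (fun x => f x - c / 2 * x ^ 2) a b -> a < p < b -> a < q < b ->
  (f p + f q) / 2 - c / 8 * (q - p) ^ 2 <= f ((p + q) / 2).
Proof.
  intros Hconc Hp Hq.
  pose proof (Hconc p q (1 / 2) Hp Hq ltac:(lra)) as H; cbv beta in H.
  replace (1 / 2 * p + (1 - 1 / 2) * q) with ((p + q) / 2) in H by field.
  assert (((p + q) / 2) ^ 2 = 1 / 2 * p ^ 2 + (1 - 1 / 2) * q ^ 2 - (q - p) ^ 2 / 4)
    by field.
  lra.
Qed.

(* Endpoints are reached by shrinking p, q towards the centre of [a, b] by a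
   factor 1 - d: the three values of f move by at most L d (b - a), and the
   penalty term only decreases. *)
Lemma semiconcave_on_midpoint (f : R -> R) (a b : R) :
  a < b -> lipschitz_on f a b -> semiconcave_on f a b ->
  exists c, 0 <= c /\ midpoint_semiconcave f a b c.
Proof.
  intros Hab Hlip [c [Hc Hconc]].
  destruct (lipschitz_on_nonneg f a b Hlip) as [L [HL Hf]].
  exists c; split; [exact Hc|]; intros p q Hp Hq.
  apply Rle_of_le_shift_small with (K := 2 * L * (b - a)); [nra|]; intros d Hd.
  set (o := (a + b) / 2).
  set (p' := p + d * (o - p)); set (q' := q + d * (o - q)).
  assert (Hshrink : forall t, a <= t <= b ->
    a < t + d * (o - t) < b /\ Rabs (t + d * (o - t) - t) <= d * (b - a)).
  { intros t Ht; unfold o.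
    assert (0 <= (1 - d) * (t - a)) by (apply Rmult_le_pos; lra).
    assert (0 <= (1 - d) * (b - t)) by (apply Rmult_le_pos; lra).
    split; [split; nra|]; apply Rabs_le; split; nra. }
  destruct (Hshrink p Hp) as [Hp' Hpp']; destruct (Hshrink q Hq) as [Hq' Hqq'].
  fold p' in Hp', Hpp'; fold q' in Hq', Hqq'.
  destruct (Hshrink ((p + q) / 2) ltac:(lra)) as [_ Hmm'].
  replace ((p + q) / 2 + d * (o - (p + q) / 2)) with ((p' + q') / 2) in Hmm'
    by (unfold p', q'; field).
  assert (Hopen := concave_midpoint_open f a b c p' q' Hconc Hp' Hq').
  assert (Hmove : forall s t, a <= s <= b -> a <= t <= b ->
    Rabs (s - t) <= d * (b - a) -> Rabs (f s - f t) <= L * (d * (b - a))).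
  { intros s t Hs Ht Hst; eapply Rle_trans; [apply Hf; assumption|].
    apply Rmult_le_compat_l; assumption. }
  apply Rabs_le_between in Hpp', Hqq', Hmm'.
  pose proof (Rabs_le_between _ _ (Hmove p' p ltac:(lra) Hp ltac:(apply Rabs_le; lra))).
  pose proof (Rabs_le_between _ _ (Hmove q' q ltac:(lra) Hq ltac:(apply Rabs_le; lra))).
  pose proof (Rabs_le_between _ _
    (Hmove ((p' + q') / 2) ((p + q) / 2) ltac:(lra) ltac:(lra) ltac:(apply Rabs_le; lra))).
  assert (Hpen : c / 8 * (q' - p') ^ 2 <= c / 8 * (q - p) ^ 2).
  { replace (q' - p') with ((1 - d) * (q - p)) by (unfold p', q'; ring).
    apply Rmult_le_compat_l; [lra|]; rewrite Rpow_mult_distr.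
    assert (0 <= (1 - d) ^ 2 <= 1) by (split; nra).
    pose proof (pow2_ge_0 (q - p)); nra. }
  nra.
Qed.

Definition sqdist (p q : point) : R := (fst p - fst q) ^ 2 + (snd p - snd q) ^ 2.

Lemma sqdist_nonneg (p q : point) : 0 <= sqdist p q.
Proof.
  unfold sqdist; pose proof (pow2_ge_0 (fst p - fst q));
    pose proof (pow2_ge_0 (snd p - snd q)); lra.
Qed.

Lemma nearest_sqdist (M : point -> Prop) (x m m' : point) :
  nearest M x m -> M m' -> sqdist x m <= sqdist x m'.
Proof.
  intros [_ Hm] Hm'; apply sqrt_le_0; [apply sqdist_nonneg .. | exact (Hm m' Hm')].
Qed.

Lemma sqdist_midpoint (x1 x2 s1 y1 s2 y2 : R) :
  sqdist (x1, x2) ((s1 + s2) / 2, (y1 + y2) / 2)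
  = (sqdist (x1, x2) (s1, y1) + sqdist (x1, x2) (s2, y2)) / 2
    - sqdist (s1, y1) (s2, y2) / 4.
Proof. unfold sqdist; simpl; field. Qed.

Lemma sqdist_shift_snd (x : point) (s l y : R) :
  sqdist x (s, y) = sqdist x (s, l) - 2 * (y - l) * (snd x - l) + (y - l) ^ 2.
Proof. unfold sqdist; simpl; ring. Qed.

(* The gain W of the midpoint cannot pay for a vertical correction v of size
   O(c W) at distance at most eps from x when c eps <= 1/4. *)
Lemma midpoint_gain_nonpos (W v e c eps : R) :
  W <= eps ^ 2 -> Rabs e <= eps -> 0 <= c -> c * eps <= 1 / 4 ->
  Rabs v <= c / 2 * W -> W <= v ^ 2 - 2 * v * e -> W <= 0.
Proof.
  intros HWe He Hc Hce Hv Hgain.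
  destruct (Rle_dec W 0) as [|HW]; [assumption|]; apply Rnot_le_lt in HW.
  pose proof (Rabs_pos v) as HA; pose proof (Rabs_pos e) as HE.
  assert (Hv2 : v ^ 2 <= W / 64).
  { rewrite <- pow2_abs.
    assert (Hce2 : (c * eps) ^ 2 <= 1 / 16)
      by (pose proof (Rmult_le_pos c eps Hc ltac:(lra)); nra).
    assert (HcW : (c * W) ^ 2 <= (c * eps) ^ 2 * W).
    { replace ((c * W) ^ 2) with (c * c * W * W) by ring.
      replace ((c * eps) ^ 2 * W) with (c * c * W * eps ^ 2) by ring.
      apply Rmult_le_compat_l; [|lra]. pose proof (Rmult_le_pos c c Hc Hc); nra. }
    assert (Rabs v ^ 2 <= (c / 2 * W) ^ 2) by (apply pow_incr; lra).
    nra. }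
  assert (Hve : - (2 * v * e) <= W / 4).
  { assert (- (v * e) <= Rabs v * Rabs e)
      by (rewrite <- Rabs_mult, <- Rabs_Ropp; apply Rle_abs).
    assert (Rabs v * Rabs e <= c / 2 * W * eps) by (apply Rmult_le_compat; lra).
    nra. }
  lra.
Qed.

Definition region (a b : R) (psi phi : R -> R) (p : point) : Prop :=
  a <= fst p <= b /\ psi (fst p) <= snd p <= phi (fst p).

Section Region.

Variables (a b : R) (psi phi : R -> R) (M : point -> Prop).
Hypothesis Hab : a < b.
Hypothesis HM : forall p, M p <-> region a b psi phi p.
Hypothesis Hord : forall t, a <= t <= b -> psi t <= phi t.

(* The height of the point of the region above abscissa t nearest to height
   x2; t is clamped so that it is Lipschitz on all of R, as [continuity_pt] is
   two-sided even at a and b. *)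
Let height (x2 t : R) : R :=
  clamp (psi (clamp a b t)) (phi (clamp a b t)) x2.

Lemma height_in_region (x2 t : R) : a <= t <= b -> M (t, height x2 t).
Proof.
  intros Ht; apply HM; unfold region, height; simpl.
  rewrite (clamp_id a b t Ht); split; [exact Ht|]; apply clamp_in, Hord, Ht.
Qed.

Lemma exists_nearest (L1 L2 : R) :
  0 <= L1 -> 0 <= L2 -> lipschitz_with phi a b L1 -> lipschitz_with psi a b L2 ->
  forall x, exists m, nearest M x m.
Proof.
  intros HL1 HL2 Hphi Hpsi [x1 x2].
  set (G := fun t => sqdist (x1, x2) (t, height x2 t)).
  assert (Hheight : forall t, continuity_pt (height x2) t).
  { apply lipschitz_continuity_pt with (K := L2 + L1); [lra|]; intros t t'.
    eapply Rle_trans; [apply clamp_lipschitz|].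
    rewrite Rminus_diag, Rabs_R0.
    pose proof (lipschitz_with_clamp psi a b L2 ltac:(lra) HL2 Hpsi t t').
    pose proof (lipschitz_with_clamp phi a b L1 ltac:(lra) HL1 Hphi t t'). lra. }
  assert (HG : forall t, continuity_pt G t).
  { intros t; unfold G, sqdist; simpl.
    apply continuity_pt_plus; apply continuity_pt_sqr_dev; [reg | apply Hheight]. }
  destruct (continuity_ab_min G a b ltac:(lra) (fun t _ => HG t)) as [t [Hmin Ht]].
  exists (t, height x2 t); split; [exact (height_in_region x2 t Ht)|].
  intros [t' y'] Hm'; apply sqrt_le_1_alt.
  destruct (proj1 (HM _) Hm') as [Ht' Hy']; simpl in Ht', Hy'.
  eapply Rle_trans; [exact (Hmin t' Ht')|]; unfold G, sqdist; simpl.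
  unfold height; rewrite (clamp_id a b t' Ht').
  pose proof (clamp_nearest (psi t') (phi t') x2 y' Hy'); lra.
Qed.

Lemma region_near_midpoint (c : R) :
  0 <= c -> midpoint_semiconcave phi a b c ->
  midpoint_semiconcave (fun t => - psi t) a b c ->
  forall s1 y1 s2 y2, M (s1, y1) -> M (s2, y2) ->
  exists y, M ((s1 + s2) / 2, y) /\
    Rabs (y - (y1 + y2) / 2) <= c / 8 * sqdist (s1, y1) (s2, y2).
Proof.
  intros Hc Hphi Hpsi s1 y1 s2 y2 Hm1 Hm2.
  destruct (proj1 (HM _) Hm1) as [Hs1 Hy1].
  destruct (proj1 (HM _) Hm2) as [Hs2 Hy2].
  simpl in Hs1, Hy1, Hs2, Hy2.
  set (s := (s1 + s2) / 2); set (l := (y1 + y2) / 2).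
  set (W := sqdist (s1, y1) (s2, y2)).
  assert (Hs : a <= s <= b) by (unfold s; lra).
  assert (HW : 0 <= W) by apply sqdist_nonneg.
  assert (HsW : (s2 - s1) ^ 2 <= W)
    by (unfold W, sqdist; simpl; pose proof (pow2_ge_0 (y1 - y2)); nra).
  exists (clamp (psi s) (phi s) l); split.
  - apply HM; split; [exact Hs | apply clamp_in, Hord, Hs].
  - apply clamp_near; [apply Hord, Hs | nra | |].
    + pose proof (Hpsi s1 s2 Hs1 Hs2) as Hmid; fold s in Hmid; unfold l; nra.
    + pose proof (Hphi s1 s2 Hs1 Hs2) as Hmid; fold s in Hmid; unfold l; nra.
Qed.

Lemma nearest_unique (c : R) :
  0 <= c -> midpoint_semiconcave phi a b c ->
  midpoint_semiconcave (fun t => - psi t) a b c ->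
  forall x m1 m2, nearest M x m1 -> nearest M x m2 ->
    dist2 x m1 < 1 / (4 * (c + 1)) -> m1 = m2.
Proof.
  intros Hc Hphi Hpsi [x1 x2] [s1 y1] [s2 y2] N1 N2 Hd.
  set (eps := 1 / (4 * (c + 1))) in *.
  assert (Heps : 0 < eps) by (unfold eps; apply Rdiv_lt_0_compat; lra).
  assert (Hce : c * eps <= 1 / 4).
  { assert (eps * (4 * (c + 1)) = 1) by (unfold eps; field; lra). nra. }
  set (D := sqdist (x1, x2) (s1, y1)).
  assert (HD : sqdist (x1, x2) (s2, y2) = D).
  { apply Rle_antisym; apply nearest_sqdist with M;
      [exact N2 | exact (proj1 N1) | exact N1 | exact (proj1 N2)]. }
  assert (HDe : D < eps ^ 2).
  { pose proof (sqrt_sqrt D (sqdist_nonneg _ _)); pose proof (sqrt_pos D).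
    change (sqrt D < eps) in Hd; nra. }
  set (W := sqdist (s1, y1) (s2, y2) / 4).
  set (s := (s1 + s2) / 2); set (l := (y1 + y2) / 2).
  destruct (region_near_midpoint c Hc Hphi Hpsi s1 y1 s2 y2 (proj1 N1) (proj1 N2))
    as [y [Hy Hyl]].
  fold s in Hy; fold l in Hyl.
  replace (c / 8 * sqdist (s1, y1) (s2, y2)) with (c / 2 * W) in Hyl by (unfold W; field).
  assert (Hmid : sqdist (x1, x2) (s, l) = D - W)
    by (unfold s, l, W; rewrite sqdist_midpoint, HD; fold D; lra).
  assert (Hgain : D <= D - W - 2 * (y - l) * (x2 - l) + (y - l) ^ 2).
  { pose proof (nearest_sqdist M _ _ _ N1 Hy) as Hnear.
    rewrite (sqdist_shift_snd _ s l y), Hmid in Hnear; exact Hnear. }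
  assert (HWe : W <= eps ^ 2 /\ Rabs (x2 - l) <= eps).
  { assert (0 <= W) by (unfold W; pose proof (sqdist_nonneg (s1, y1) (s2, y2)); lra).
    unfold sqdist in Hmid; simpl in Hmid.
    pose proof (pow2_ge_0 (x1 - s)); pose proof (pow2_ge_0 (x2 - l)).
    assert ((x2 - l) ^ 2 < eps ^ 2) by lra.
    split; [lra | apply Rabs_le; split; nra]. }
  destruct HWe as [HWe He].
  assert (HW0 : W <= 0) by (apply (midpoint_gain_nonpos W (y - l) (x2 - l) c eps); lra).
  assert (Hsq : sqdist (s1, y1) (s2, y2) = 0)
    by (pose proof (sqdist_nonneg (s1, y1) (s2, y2)); unfold W in HW0; lra).
  unfold sqdist in Hsq; simpl in Hsq.
  pose proof (pow2_ge_0 (s1 - s2)); pose proof (pow2_ge_0 (y1 - y2)).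
  f_equal; nra.
Qed.

End Region.

Theorem region_positive_reach (a b : R) (psi phi : R -> R) (M : point -> Prop) :
  a < b -> (forall p, M p <-> region a b psi phi p) ->
  (forall t, a <= t <= b -> psi t <= phi t) ->
  lipschitz_on phi a b -> lipschitz_on psi a b ->
  semiconcave_on phi a b -> semiconvex_on psi a b -> positive_reach M.
Proof.
  intros Hab HM Hord Hlphi Hlpsi Hcphi Hcpsi.
  destruct (lipschitz_on_nonneg phi a b Hlphi) as [L1 [HL1 Hphi]].
  destruct (lipschitz_on_nonneg psi a b Hlpsi) as [L2 [HL2 Hpsi]].
  destruct (semiconcave_on_midpoint phi a b Hab Hlphi Hcphi) as [c1 [Hc1 Hmphi]].
  destruct (semiconcave_on_midpoint (fun t => - psi t) a b Hab
    (lipschitz_on_opp psi a b Hlpsi) Hcpsi) as [c2 [Hc2 Hmpsi]].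
  exists (1 / (4 * (c1 + c2 + 1))); split; [apply Rdiv_lt_0_compat; lra|].
  intros x [m [Hm Hxm]].
  destruct (exists_nearest a b psi phi M Hab HM Hord L1 L2 HL1 HL2 Hphi Hpsi x) as [m1 Hm1].
  exists m1; split; [exact Hm1|]; intros m2 Hm2.
  apply (nearest_unique a b psi phi M HM Hord (c1 + c2) ltac:(lra)
    (midpoint_semiconcave_mono phi a b c1 (c1 + c2) ltac:(lra) Hmphi)
    (midpoint_semiconcave_mono _ a b c2 (c1 + c2) ltac:(lra) Hmpsi) x m1 m2 Hm1 Hm2).
  eapply Rle_lt_trans; [apply (proj2 Hm1 m Hm) | exact Hxm].
Qed.

Theorem lemma2p22 (B : point -> Prop) : B_set B -> positive_reach B.
Proof.
  intros [HB | HB];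
    destruct HB as [r [phi [psi [Hr [Hlphi [Hlpsi [Hsign [Hcphi [Hcpsi
      [_ [_ [_ [_ HM]]]]]]]]]]]]];
    [apply (region_positive_reach 0 r psi phi)
    | apply (region_positive_reach (- r) r psi phi)];
    try assumption; try lra;
    intros t Ht; specialize (Hsign t Ht); lra.
Qed.
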